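(* Let $V$ be a finite set with weights $\pi:V\to\mathbb{R}_+$, $\pi(V)=1$, and let $v_i\in\mathbb{R}^n$, $i\in V$, satisfy $\sum_{i<j}\pi(i)\pi(j)\|v_i-v_j\|^2=1$. Then one of the following holds: (i) (large core) there is a vector $v$ with $\pi\big(\{i:\|v_i-v\|\le\frac{1}{2\sqrt{10}}\}\big)\ge 1/4$; (ii) (well spread) there is a vector $w$ and a constant $c>0$ such that, setting $u_i=c(v_i-w)$, there is a subset $U\subseteq V$ with $\pi(U)\gtrsim1$, $\|u_i\|\le1$ for all $i\in U$, and $\sum_{i,j\in U}\pi(i)\pi(j)\|u_i-u_j\|^2\gtrsim1$.
   Context: $\pi(A)=\sum_{i\in A}\pi(i)$; $\gtrsim$ hides absolute positive constants. *)

From mathcomp Require Import all_boot all_order all_algebra.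
Set Implicit Arguments. Unset Strict Implicit. Unset Printing Implicit Defensive.
Import Order.TTheory GRing.Theory Num.Theory.
Local Open Scope ring_scope.

Definition sqnorm (R : rcfType) (n : nat) (x : 'rV[R]_n) : R :=
  \sum_(k < n) (x 0 k) ^+ 2.

Definition enorm (R : rcfType) (n : nat) (x : 'rV[R]_n) : R :=
  Num.sqrt (sqnorm x).

(* Suppose no ball of radius 1/(2 sqrt 10) centred at a point v_i carries
   mass 1/4 (otherwise we are in the first case).  Since the full pair sum is 2,
   some v_i0 has mean squared distance at most 2 to the others; by Markov the
   set U of points within distance 3 of v_i0 has mass at least 7/9.  For every
   i, all of U but mass 1/4 lies at squared distance more than 1/40 from v_i,
   which bounds the spread of U from below; scaling by 1/3 around v_i0 puts U
   in the unit ball. *)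

From mathcomp Require Import all_boot all_order all_algebra.
From mathcomp Require Import lra.
Set Implicit Arguments. Unset Strict Implicit. Unset Printing Implicit Defensive.
Import Order.TTheory GRing.Theory Num.Theory.
Local Open Scope ring_scope.

Lemma sum_pairs_sym (R : nmodType) (m : nat) (G : 'I_m -> 'I_m -> R) :
  (forall i j, G i j = G j i) -> (forall i, G i i = 0) ->
  \sum_(i < m) \sum_(j < m) G i j = (\sum_(i < m) \sum_(j < m | (i < j)%N) G i j) *+ 2.
Proof.
move=> GC G0.
have split_row i :
    \sum_(j < m) G i j = \sum_(j < m | (i < j)%N) G i j + \sum_(j < m | (j < i)%N) G i j.
  rewrite [LHS](bigID (fun j : 'I_m => (i < j)%N)) /=.
  rewrite [X in _ + X](bigD1 i) ?ltnn //= G0 add0r.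
  by congr (_ + _); apply: eq_bigl => j; rewrite -leqNgt andbC ltn_neqAle.
under eq_bigr do rewrite split_row.
rewrite big_split mulr2n /=; congr (_ + _).
rewrite (exchange_big_dep xpredT) //=.
by apply: eq_bigr => j _; apply: eq_bigr => i _; rewrite GC.
Qed.

Lemma exists_le_mean (R : realDomainType) (I : finType) (pi f : I -> R) :
  (forall i, 0 <= pi i) -> \sum_i pi i = 1 -> exists i, f i <= \sum_i pi i * f i.
Proof.
move=> pi_ge0 pi_sum1.
have [i0 _ | I0] := pickP (@predT I); last first.
  by move: pi_sum1; rewrite big_pred0 // => /eqP; rewrite eq_sym oner_eq0.
case: (arg_minP f (P := predT) (i0 := i0) isT) => i _ i_min; exists i.
rewrite -[f i]mul1r -pi_sum1 mulr_suml; apply: ler_sum => j _.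
by rewrite ler_wpM2l // i_min.
Qed.

Lemma markov_sum (R : numDomainType) (I : finType) (P : pred I) (pi g : I -> R) (r : R) :
  (forall i, 0 <= pi i) -> (forall i, 0 <= g i) ->
  r * \sum_(i | P i && (r < g i)) pi i <= \sum_(i | P i) pi i * g i.
Proof.
move=> pi_ge0 g_ge0.
rewrite mulr_sumr [X in _ <= X](bigID (fun i => r < g i)) /= -[X in X <= _]addr0.
apply: lerD; last by apply: sumr_ge0 => i _; rewrite mulr_ge0.
by apply: ler_sum => i /andP[_ /ltW r_le]; rewrite mulrC ler_wpM2l.
Qed.

Lemma sum_filter_andI_ge (R : numDomainType) (I : finType) (P Q : pred I) (pi : I -> R) :
  (forall i, 0 <= pi i) ->
  \sum_(i | P i) pi i - \sum_(i | ~~ Q i) pi i <= \sum_(i | P i && Q i) pi i.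
Proof.
move=> pi_ge0; rewrite lerBlDr (bigID Q) /= lerD2l [X in _ <= X](bigID P) /=.
rewrite (eq_bigl (fun i => ~~ Q i && P i)) => [|i]; last by rewrite andbC.
by rewrite lerDl sumr_ge0.
Qed.

Section SquaredNorm.
Variables (R : rcfType) (n : nat).
Implicit Types (x y w : 'rV[R]_n).

Lemma sqnorm_ge0 x : 0 <= sqnorm x.
Proof. by apply: sumr_ge0 => k _; rewrite sqr_ge0. Qed.

Lemma sqnorm0 : sqnorm (0 : 'rV[R]_n) = 0.
Proof. by apply: big1 => k _; rewrite mxE expr0n. Qed.

Lemma sqnormZ (a : R) x : sqnorm (a *: x) = a ^+ 2 * sqnorm x.
Proof. by rewrite /sqnorm mulr_sumr; apply: eq_bigr => k _; rewrite mxE exprMn. Qed.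

Lemma sqnormN x : sqnorm (- x) = sqnorm x.
Proof. by apply: eq_bigr => k _; rewrite mxE sqrrN. Qed.

Lemma sqnorm_distC x y : sqnorm (x - y) = sqnorm (y - x).
Proof. by rewrite -sqnormN opprB. Qed.

Lemma sqnormZ_dist (a : R) x y w :
  sqnorm (a *: (x - w) - a *: (y - w)) = a ^+ 2 * sqnorm (x - y).
Proof. by rewrite -scalerBr opprB addrA subrK sqnormZ. Qed.

Lemma enorm_le x (r : R) : 0 <= r -> (enorm x <= r) = (sqnorm x <= r ^+ 2).
Proof.
by move=> r_ge0; rewrite /enorm -[X in _ <= X]ger0_norm // -sqrtr_sqr ler_sqrt ?sqr_ge0.
Qed.

End SquaredNorm.

Lemma core_radius_sqr (R : rcfType) : (1 / (2 * Num.sqrt 10) : R) ^+ 2 = 1 / 40.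
Proof.
by rewrite expr_div_n exprMn sqr_sqrtr ?ler0n // expr1n; congr (_ / _); rewrite -natrX -natrM.
Qed.

Section WeightedPoints.
Variables (R : rcfType) (m n : nat) (pi : 'I_m -> R) (v : 'I_m -> 'rV[R]_n).
Hypotheses (pi_ge0 : forall i, 0 <= pi i) (pi_sum1 : \sum_i pi i = 1).

Definition mean_sqdist i := \sum_j pi j * sqnorm (v i - v j).

Lemma exists_mean_sqdist_le2 :
  \sum_(i < m) \sum_(j < m | (i < j)%N) pi i * pi j * sqnorm (v i - v j) = 1 ->
  exists i, mean_sqdist i <= 2.
Proof.
move=> pairs1; have [i le_mean] := exists_le_mean mean_sqdist pi_ge0 pi_sum1.
exists i; suff <- : \sum_i pi i * mean_sqdist i = 2 by [].
rewrite -pairs1 -sum_pairs_sym => [|j k|j]; last first.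
- by rewrite subrr sqnorm0 mulr0.
- by rewrite sqnorm_distC [pi j * _]mulrC.
by apply: eq_bigr => j _; rewrite mulr_sumr; apply: eq_bigr => k _; rewrite mulrA.
Qed.

Lemma near_mass_ge i (r : R) : 0 < r ->
  1 - mean_sqdist i / r <= \sum_(j | sqnorm (v i - v j) <= r) pi j.
Proof.
move=> r_gt0; rewrite -pi_sum1 (bigID (fun j => sqnorm (v i - v j) <= r)) /=.
rewrite -addrA gerDl subr_le0 ler_pdivlMr // mulrC.
rewrite (eq_bigl (fun j => predT j && (r < sqnorm (v i - v j)))) => [|j]; last by rewrite ltNge.
by apply: markov_sum => // j; apply: sqnorm_ge0.
Qed.

Lemma sum_in_sqdist_ge (U : {set 'I_m}) (r mu : R) : 0 <= r ->
  (forall i, \sum_(j | enorm (v j - v i) <= r) pi j <= mu) ->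
  r ^+ 2 * (\sum_(i in U) pi i) * (\sum_(i in U) pi i - mu) <=
  \sum_(i in U) \sum_(j in U) pi i * pi j * sqnorm (v i - v j).
Proof.
move=> r_ge0 small_core; set p := \sum_(i in U) pi i.
have row_ge i : r ^+ 2 * (p - mu) <= \sum_(j in U) pi j * sqnorm (v i - v j).
  apply: le_trans (markov_sum _ (r ^+ 2) pi_ge0 (fun j => sqnorm_ge0 _)).
  rewrite ler_wpM2l ?sqr_ge0 // (le_trans _ (sum_filter_andI_ge _ _ pi_ge0)) // lerB //.
  rewrite (eq_bigl (fun j => enorm (v j - v i) <= r)) => [|j]; first exact: small_core.
  by rewrite enorm_le // sqnorm_distC leNgt.
rewrite mulrAC mulr_sumr; apply: ler_sum => i _.
under eq_bigr do rewrite -mulrA.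
by rewrite -mulr_sumr mulrC ler_wpM2l.
Qed.

End WeightedPoints.

Theorem mainTheorem11 (R : rcfType) :
  exists c1 c2 : R, 0 < c1 /\ 0 < c2 /\
  forall (m n : nat) (pi : 'I_m -> R) (v : 'I_m -> 'rV[R]_n),
    (forall i, 0 <= pi i) ->
    \sum_(i < m) pi i = 1 ->
    \sum_(i < m) \sum_(j < m | (i < j)%N) pi i * pi j * sqnorm (v i - v j) = 1 ->
    (exists x : 'rV[R]_n,
        \sum_(i < m | enorm (v i - x) <= 1 / (2 * Num.sqrt 10)) pi i >= 1 / 4)
    \/
    (exists (w : 'rV[R]_n) (c : R), 0 < c /\
       exists U : {set 'I_m},
         \sum_(i in U) pi i >= c1 /\
         (forall i, i \in U -> enorm (c *: (v i - w)) <= 1) /\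
         \sum_(i in U) \sum_(j in U)
            pi i * pi j * sqnorm (c *: (v i - w) - c *: (v j - w)) >= c2).
Proof.
exists (7 / 9), (1 / 1000); split; first lra; split; first lra.
move=> m n pi v pi_ge0 pi_sum1 pairs1.
set r := 1 / (2 * Num.sqrt 10).
have r_ge0 : 0 <= r by rewrite divr_ge0 ?mulr_ge0 ?sqrtr_ge0.
have [/existsP[i core_i] | /existsPn no_core] :=
  boolP [exists i, 1 / 4 <= \sum_(j | enorm (v j - v i) <= r) pi j].
  by left; exists (v i).
right; have [i0 mean_i0] := exists_mean_sqdist_le2 pi_ge0 pi_sum1 pairs1.
pose U := [set j | sqnorm (v i0 - v j) <= 9].
have massU : 7 / 9 <= \sum_(j in U) pi j.
  rewrite (eq_bigl (fun j => sqnorm (v i0 - v j) <= 9)) => [|j]; last by rewrite inE.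
  apply: le_trans (near_mass_ge v pi_ge0 pi_sum1 i0 (ltr0Sn _ 8)); lra.
exists (v i0), (1 / 3); split; first lra.
exists U; split; first exact: massU.
split=> [j | ].
  by rewrite inE enorm_le // sqnormZ sqnorm_distC expr_div_n; lra.
have small_core i : \sum_(j | enorm (v j - v i) <= r) pi j <= 1 / 4.
  by rewrite ltW // ltNge no_core.
have := sum_in_sqdist_ge pi_ge0 U r_ge0 small_core; rewrite core_radius_sqr => spread.
under eq_bigr do under eq_bigr do rewrite sqnormZ_dist mulrCA.
under eq_bigr do rewrite -mulr_sumr.
rewrite -mulr_sumr; nra.
Qed.
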